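(* Let $X$ be a finite set and $f$ a closure operator on $X$. The set $S(f)$ of closed sets of $f$ is a chain with respect to set inclusion if and only if there is a weak order $\succeq$ on $X$ generating $f$, i.e. such that $f(A)=H(\succeq,h_A)$ for every $A\subseteq X$. Moreover, the weak order generating $f$ is unique.
   Context: A closure operator on $X$ is a map $f:2^X\to 2^X$ with $A\subseteq f(A)$, $f(\emptyset)=\emptyset$, $f(f(A))=f(A)$, and $A\subseteq B\Rightarrow f(A)\subseteq f(B)$; $S(f)=\{A: f(A)=A\}$. A weak order is a complete and transitive binary relation. For a weak order $\succeq$ and $A\subseteq X$, $h_A(\succeq)=\{x\in A: x\succeq y\ \forall y\in A\}$; for nonempty $A$, $H(\succeq,h_A)=\{x\in X: h_A(\succeq)\succeq x\}$ (i.e. $x$ is weakly below the $\succeq$-maximal elements of $A$), and $H(\succeq,h_\emptyset)=\emptyset$. *)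

From mathcomp Require Import all_boot.
Set Implicit Arguments. Unset Strict Implicit. Unset Printing Implicit Defensive.

Definition closure_operator (X : finType) (f : {set X} -> {set X}) : Prop :=
  [/\ (forall A : {set X}, A \subset f A),
      f set0 = set0,
      (forall A : {set X}, f (f A) = f A) &
      (forall A B : {set X}, A \subset B -> f A \subset f B)].

Definition closed_sets (X : finType) (f : {set X} -> {set X}) : {set {set X}} :=
  [set A | f A == A].

Definition is_chain (X : finType) (S : {set {set X}}) : Prop :=
  forall A B : {set X}, A \in S -> B \in S -> (A \subset B) || (B \subset A).

(* weak order: complete and transitive; R x y reads x ⪰ y *)
Definition weak_order (X : finType) (R : rel X) : Prop :=
  (forall x y, R x y || R y x) /\ transitive R.

Definition hmax (X : finType) (R : rel X) (A : {set X}) : {set X} :=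
  [set x in A | [forall y in A, R x y]].

Definition Hset (X : finType) (R : rel X) (A : {set X}) : {set X} :=
  if A == set0 then set0
  else [set x | [exists y in hmax R A, R y x]].

Definition generates (X : finType) (R : rel X) (f : {set X} -> {set X}) : Prop :=
  forall A : {set X}, f A = Hset R A.

(** Proof idea: for a weak order, [H(⪰, h_A)] is the down-set of any maximal
element of [A], and down-sets of a total preorder form a chain.  Conversely,
if the closed sets form a chain, put [x ⪰ y] iff [y ∈ f {x}]; the closures of
singletons are comparable, so this is a weak order, and [f A = f {m}] for a
maximal element [m] of [A].  Uniqueness holds because a generating order is
recovered from [f] on singletons. *)
From mathcomp Require Import all_boot.
Set Implicit Arguments. Unset Strict Implicit. Unset Printing Implicit Defensive.

Section WeakOrder.
Variables (X : finType) (R : rel X).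
Hypothesis woR : weak_order R.

Lemma weak_order_refl : reflexive R.
Proof. by move=> x; have := woR.1 x x; rewrite orbb. Qed.

Lemma hmaxP (A : {set X}) m :
  reflect (m \in A /\ forall y, y \in A -> R m y) (m \in hmax R A).
Proof.
rewrite inE; apply: (iffP andP) => [[mA /forall_inP]|[mA mmax]] //.
by split=> //; apply/forall_inP.
Qed.

Lemma hmax_neq0 (A : {set X}) : A != set0 -> exists m, m \in hmax R A.
Proof.
case/set0Pn=> a aA.
(* An element of [A] with the largest up-set is maximal: [y ⪰ m] would make
   the up-set of [y] contain, hence equal, that of [m]. *)
case: (arg_maxnP (fun y => #|[set z | R y z]|) aA) => m mA mmax.
exists m; apply/hmaxP; split=> // y yA.
case/orP: (woR.1 m y) => // Rym.
have sub_up : [set z | R m z] \subset [set z | R y z].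
  by apply/subsetP => z; rewrite !inE; apply: woR.2.
have /eqP up_eq : [set z | R m z] == [set z | R y z].
  by rewrite eqEcard sub_up; exact: mmax.
by have := weak_order_refl y; rewrite -[R y y]inE -up_eq inE.
Qed.

Lemma Hset_hmax (A : {set X}) m :
  m \in hmax R A -> Hset R A = [set x | R m x].
Proof.
move=> /[dup] Hm /hmaxP[mA mmax].
rewrite /Hset; case: eqP => [A0|_]; first by rewrite A0 inE in mA.
apply/setP => x; rewrite !inE; apply/exists_inP/idP => [[y /hmaxP[yA _] Ryx]|Rmx].
  exact: woR.2 (mmax y yA) Ryx.
by exists m.
Qed.

Lemma Hset1 x : Hset R [set x] = [set y | R x y].
Proof.
apply: Hset_hmax; apply/hmaxP.
by split=> [|y /set1P ->]; rewrite ?set11 ?weak_order_refl.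
Qed.

Lemma Hset_total (A B : {set X}) :
  (Hset R A \subset Hset R B) || (Hset R B \subset Hset R A).
Proof.
have [->|/hmax_neq0[a Ha]] := eqVneq A set0; first by rewrite /Hset eqxx sub0set.
have [->|/hmax_neq0[b Hb]] := eqVneq B set0.
  by rewrite [Hset R set0]/Hset eqxx sub0set orbT.
rewrite (Hset_hmax Ha) (Hset_hmax Hb).
by case/orP: (woR.1 a b) => [Rab|Rba]; apply/orP; [right|left];
  apply/subsetP => z; rewrite !inE; apply: woR.2.
Qed.

End WeakOrder.

Lemma generates_rel (X : finType) (R : rel X) (f : {set X} -> {set X}) :
  weak_order R -> generates R f -> R =2 (fun x y => y \in f [set x]).
Proof. by move=> woR genR x y; rewrite genR Hset1 ?inE. Qed.

Lemma generates_chain (X : finType) (R : rel X) (f : {set X} -> {set X}) :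
  weak_order R -> generates R f -> is_chain (closed_sets f).
Proof.
move=> woR genR A B; rewrite !inE => /eqP <- /eqP <-.
by rewrite !genR Hset_total.
Qed.

Definition closure_rel (X : finType) (f : {set X} -> {set X}) : rel X :=
  fun x y => y \in f [set x].

Section ChainClosure.
Variables (X : finType) (f : {set X} -> {set X}).
Hypotheses (clf : closure_operator f) (chain_f : is_chain (closed_sets f)).

Lemma closure_rel_weak_order : weak_order (closure_rel f).
Proof.
case: clf => ext _ idem mono; split.
  have cl z : f [set z] \in closed_sets f by rewrite inE idem.
  have self z : z \in f [set z] by apply: (subsetP (ext _)); rewrite set11.
  move=> x y; case/orP: (chain_f (cl x) (cl y)) => /subsetP sub; apply/orP.
    by right; apply: sub.
  by left; apply: sub.
move=> y x z; rewrite /closure_rel => yx zy.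
have sub_yx : f [set y] \subset f [set x] by rewrite -[f [set x]]idem mono ?sub1set.
exact: (subsetP sub_yx).
Qed.

Lemma closure_rel_generates : generates (closure_rel f) f.
Proof.
have woR := closure_rel_weak_order; case: (clf) => _ f0 idem mono.
move=> A; have [->|/(hmax_neq0 woR)[m Hm]] := eqVneq A set0.
  by rewrite f0 /Hset eqxx.
rewrite (Hset_hmax woR Hm); case/hmaxP: Hm => mA mmax.
have -> : [set x | closure_rel f m x] = f [set m] by apply/setP => x; rewrite inE.
apply/eqP; rewrite eqEsubset; apply/andP; split; last by rewrite mono ?sub1set.
have A_sub : A \subset f [set m] by apply/subsetP.
by have := mono _ _ A_sub; rewrite idem.
Qed.

End ChainClosure.

Theorem proposition4 (X : finType) (f : {set X} -> {set X}) :
  closure_operator f ->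
  (is_chain (closed_sets f) <-> exists R : rel X, weak_order R /\ generates R f) /\
  (forall R1 R2 : rel X, weak_order R1 -> generates R1 f ->
                         weak_order R2 -> generates R2 f -> R1 =2 R2).
Proof.
move=> clf; split.
  split=> [chain_f|[R [woR genR]]]; last exact: generates_chain woR genR.
  exists (closure_rel f).
  by split; [exact: closure_rel_weak_order | exact: closure_rel_generates].
move=> R1 R2 wo1 gen1 wo2 gen2 x y.
by rewrite (generates_rel wo1 gen1) (generates_rel wo2 gen2).
Qed.
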